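(* Let $n\ge1$, let $C$ be a cyclic group of order $n$ with generator $c_0$, and let $A$ be a finite abelian group with $A=\langle e_r\rangle\times\cdots\times\langle e_1\rangle$, where $e_i$ has order $d_i$. Let $G$ and $H$ be groups each containing $C$ as a central subgroup, with surjections $\pi_G:G\to A$, $\pi_H:H\to A$ with kernel $C$. Assume $\phi_G=\phi_H$, and that for each $1\le i\le r$ there exist $g_i\in G$, $h_i\in H$ with $\pi_G(g_i)=e_i=\pi_H(h_i)$ such that $g_i$ and $h_i$ have the same order, this order being either $d_i$ or $2d_i$. Then there exists a group isomorphism $f:G\to H$ which restricts to the identity on $C$ (in particular $f(c_0)=c_0$).
   Context: $[g,h]=ghg^{-1}h^{-1}$. For a group $G$ containing a central cyclic subgroup $C=\langle c_0\rangle$ of order $n$ with abelian quotient $A$ via $\pi_G$, the form $\phi_G:A\times A\to\mathbb{Z}/n$ is defined by $[\hat a,\hat b]=c_0^{\phi_G(a,b)}$ for any lifts $\hat a,\hat b$ of $a,b$ (this is independent of the lifts). *)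

From HB Require Import structures.
From mathcomp Require Import all_boot all_fingroup all_solvable.
Set Implicit Arguments. Unset Strict Implicit. Unset Printing Implicit Defensive.
Import GroupScope.

(* The paper's commutator convention: [g,h] = g h g^-1 h^-1
   (MathComp's [~ g, h] is g^-1 h^-1 g h, so we define the paper's one). *)
Definition commP (gT : finGroupType) (x y : gT) : gT := x * y * x^-1 * y^-1.

Definition lift (gT aT : finGroupType) (G : {set gT}) (pi : gT -> aT) (a : aT) : gT :=
  repr (G :&: pi @^-1: [set a]).

(* phi_G(a,b) in Z/n (represented by its residue in [0, n), n = #[c0]):
   the k with [lift a, lift b] = c0^k. *)
Definition phi (gT aT : finGroupType) (G : {set gT}) (pi : gT -> aT) (c0 : gT)
    (a b : aT) : nat :=
  if [pick k : 'I_#[c0] | commP (lift G pi a) (lift G pi b) == c0 ^+ k]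
  is Some k then val k else 0.

(* Choose lifts g_i in G and h_i in H of each e_i with #[g_i] = #[h_i], and let S be
   the subgroup of G x H generated by (c0, c0) and the pairs (g_i, h_i). Both projections
   of S are onto, since G is generated by c0 and the g_i. In S the element (c0, c0) is
   central of order at most n; the commutators of the generators lie in <(c0, c0)>
   because phi_G = phi_H; and (g_i, h_i)^d_i lies there too: it is 1 if the lifts have
   order d_i, and (c0^(n/2), c0^(n/2)) if they have order 2 d_i. Hence S / <(c0, c0)> is
   abelian, generated by elements of orders dividing d_i, so
   |S| <= n d_1 ... d_r = |G| = |H|. Both projections are therefore injective, and S is
   the graph of an isomorphism G -> H mapping c0 to c0. *)
From Pilot Require Import Defs.
From HB Require Import structures.
From mathcomp Require Import all_boot all_fingroup all_solvable.
From mathcomp Require Import zify.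
Import GroupScope.

Set Implicit Arguments.
Unset Strict Implicit.

Lemma mulg_commP (gT : finGroupType) (x y : gT) : x * y = commP x y * (y * x).
Proof. by rewrite /commP -!mulgA mulKg mulVg mulg1. Qed.

Lemma commPMl (gT : finGroupType) (x y z : gT) :
  commute z y -> commP (x * z) y = commP x y.
Proof.
move=> czy; rewrite /commP invMg -!mulgA; congr (_ * _).
by rewrite mulgA czy -mulgA mulKVg.
Qed.

Lemma commPMr (gT : finGroupType) (x y z : gT) :
  commute z x -> commP x (y * z) = commP x y.
Proof.
move=> czx; rewrite /commP invMg -!mulgA; congr (_ * (_ * _)).
by rewrite mulgA (commuteV czx) -mulgA mulKVg.
Qed.

Lemma expg_pair (gT hT : finGroupType) (x : gT) (y : hT) k :
  ((x, y) : gT * hT) ^+ k = (x ^+ k, y ^+ k).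
Proof. by elim: k => // k IHk; rewrite !expgS IHk. Qed.

Lemma card_abelian_gen_leq (gT : finGroupType) (r : nat) (y : 'I_r -> gT) :
  abelian << [set y i | i : 'I_r] >> ->
  (#| << [set y i | i : 'I_r] >> | <= \prod_(i < r) #[y i])%N.
Proof.
set K := << _ >> => abK.
have yK i : y i \in K by rewrite mem_gen // imset_f.
have prod_cycles s : ((\prod_(i <- s) <[y i]>)%G \subset K) &&
                     (#|(\prod_(i <- s) <[y i]>)%G| <= \prod_(i <- s) #[y i])%N.
  elim: s => [|i s /andP[sPK leP]]; first by rewrite !big_nil /= sub1G cards1.
  rewrite !big_cons /= join_subG cycle_subG yK sPK /= comm_joingE; last first.
    by apply: centC; apply: sub_abelian_cent2 abK _ _; rewrite // cycle_subG.
  apply: leq_trans (leq_mul (leqnn #|<[y i]>|) leP).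
  by rewrite mul_cardG leq_pmulr ?cardG_gt0.
have /andP[_] := prod_cycles (index_enum 'I_r); apply: leq_trans.
apply: subset_leq_card; rewrite gen_subG; apply/subsetP => _ /imsetP[i _ ->].
by rewrite bigprodGE mem_gen //; apply/bigcupP; exists i; rewrite ?cycle_id.
Qed.

Lemma injm_card_leq (aT rT : finGroupType) (D : {group aT}) (f : {morphism D >-> rT}) :
  (#|D| <= #|f @* D|)%N -> 'injm f.
Proof. by rewrite -card_im_injm eqn_leq leq_morphim. Qed.

Lemma graph_isom (gT hT : finGroupType) (G : {group gT}) (H : {group hT})
    (S : {group gT * hT}) :
  'injm (restrm (subsetT S) (fst_morphism gT hT)) ->
  'injm (restrm (subsetT S) (snd_morphism gT hT)) ->
  fst_morphism gT hT @* S = G -> snd_morphism gT hT @* S = H ->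
  exists f : {morphism G >-> hT}, isom G H f /\ {in S, forall p, f p.1 = p.2}.
Proof.
set p1 := restrm _ _; set p2 := restrm _ _ => inj1 inj2 imS1 imS2.
have {}imS1 : p1 @* S = G by rewrite restrmEsub.
have {}imS2 : p2 @* S = H by rewrite restrmEsub.
have im_inv : invm inj1 @* G = S by rewrite -imS1 morphim_invm.
have sG : G \subset invm inj1 @*^-1 S.
  apply/subsetP => x Gx; apply/morphpreP; split; first by rewrite imS1.
  have Dx : x \in p1 @* S by rewrite imS1.
  by have := mem_morphim (invm inj1) Dx Gx; rewrite im_inv.
exists (restrm sG (p2 \o invm inj1)); split.
  apply/isomP; split; first by rewrite injm_restrm // injm_comp ?injm_invm.
  by rewrite morphim_restrm setIid morphim_comp im_inv.
move=> p Sp; change (p2 (invm inj1 (p1 p)) = p.2); by rewrite invmE.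
Qed.

Section CentralExtension.

Variables (gT aT : finGroupType) (G : {group gT}) (A : {group aT}).
Variables (pi : {morphism G >-> aT}) (c : gT).
Hypotheses (imG : pi @* G = A) (kerG : 'ker pi = <[c]>).

Lemma ker_gen_in_dom : c \in G.
Proof. by apply: (@dom_ker _ _ _ pi); rewrite kerG cycle_id. Qed.

Lemma card_ker_cycle : #|G| = (#[c] * #|A|)%N.
Proof.
have sKG : 'ker pi \subset G by apply/subsetP => x /dom_ker.
rewrite -(Lagrange sKG); congr (_ * _)%N; first by rewrite /= kerG.
by rewrite -imG card_morphim setIid.
Qed.

Lemma lift_fiber x :
  x \in G -> Defs.lift G pi (pi x) \in G /\ pi (Defs.lift G pi (pi x)) = pi x.
Proof.
move=> Gx; have : x \in G :&: pi @^-1: [set pi x] by rewrite !inE Gx eqxx.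
by move/mem_repr; rewrite /lift !inE => /andP[-> /eqP ->].
Qed.

Lemma gen_ker_lifts (r : nat) (e : 'I_r -> aT) (g : 'I_r -> gT) :
  << \bigcup_(i < r) <[e i]> >> = A ->
  (forall i, g i \in G) -> (forall i, pi (g i) = e i) ->
  << c |: [set g i | i : 'I_r] >> = G.
Proof.
move=> genA Gg pig; set K := << _ >>.
have sKG : K \subset G.
  rewrite gen_subG subUset sub1set ker_gen_in_dom.
  by apply/subsetP => _ /imsetP[i _ ->].
have sAK : A \subset pi @* K.
  rewrite -genA gen_subG; apply/bigcupsP => i _.
  by rewrite cycle_subG -pig mem_morphim // mem_gen // setU1r // imset_f.
have sKerK : 'ker pi \subset K by rewrite kerG cycle_subG mem_gen ?setU11.
apply/eqP; rewrite eqEsubset sKG /=.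
apply: subset_trans (_ : G \subset pi @*^-1 (pi @* K)) _; last by rewrite morphimGK.
by rewrite -sub_morphim_pre // imG.
Qed.

(* Since g ^+ #[pi g] lies in <[c]> and has order 2, it is the involution of <[c]>. *)
Lemma expg_order_double g :
  g \in G -> #[g] = (2 * #[pi g])%N -> g ^+ #[pi g] = c ^+ #[c]./2.
Proof.
move=> Gg og; set d := #[pi g].
have : g ^+ d \in <[c]> by rewrite -kerG; apply/kerP; rewrite ?groupX // morphX ?expg_order.
case/cyclePmin => k lt_k_c gdE; rewrite gdE; congr (_ ^+ _).
have : (#[c] %| 2 * k)%N.
  by rewrite order_dvdn mulnC expgM -gdE -expgM mulnC -og expg_order.
have k_gt0 : (0 < k)%N.
  have d_gt0 : (0 < d)%N := order_gt0 (pi g).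
  rewrite lt0n; apply/eqP => k0; move: gdE; rewrite k0 expg0 => /eqP.
  by rewrite -order_dvdn og => /(dvdn_leq d_gt0); lia.
by case/dvdnP => [[|[|q]] kE]; lia.
Qed.

Hypotheses (centralC : <[c]> \subset 'Z(G)) (abA : abelian A).

Lemma commute_cycle_dom z y : z \in <[c]> -> y \in G -> commute z y.
Proof. by move=> cz Gy; case/centerP: (subsetP centralC z cz) => _; apply. Qed.

Lemma commP_phiE g g' :
  g \in G -> g' \in G -> commP g g' = c ^+ phi G pi c (pi g) (pi g').
Proof.
move=> Gg Gg'; set l := Defs.lift G pi (pi g); set l' := Defs.lift G pi (pi g').
have [Gl pil] := lift_fiber Gg; have [Gl' pil'] := lift_fiber Gg'.
have kerM x y w : x \in G -> y \in G -> pi x = pi y -> w \in G -> commute (x^-1 * y) w.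
  move=> Gx Gy pixy Gw; apply: commute_cycle_dom => //; rewrite -kerG.
  by apply/kerP; rewrite ?(groupM, groupV) // morphM ?groupV // morphV // pixy mulVg.
have -> : commP g g' = commP l l'.
  rewrite -(mulKVg l g) commPMl; last by apply: kerM.
  by rewrite -(mulKVg l' g') commPMr //; apply: kerM.
have : commP l l' \in <[c]>.
  have [Al Al'] : pi l \in A /\ pi l' \in A by rewrite -imG !mem_morphim.
  rewrite -kerG; apply/kerP; first by rewrite /commP !(groupM, groupV).
  rewrite /commP !(morphM, groupM, groupV) // !morphV //.
  by rewrite (centsP abA _ Al _ Al') mulgK mulgV.
rewrite /phi -/l -/l'; case: pickP => [k /eqP // | none] /cyclePmin[k lt_k_c lk].
by have := none (Ordinal lt_k_c); rewrite /= lk eqxx.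
Qed.

End CentralExtension.

Section LiftGraph.

Variables (gT hT aT : finGroupType) (cG : gT) (cH : hT).
Variables (G : {group gT}) (H : {group hT}) (A : {group aT}) (r : nat) (e : 'I_r -> aT).
Variables (piG : {morphism G >-> aT}) (piH : {morphism H >-> aT}).
Hypotheses (ocGH : #[cG] = #[cH]) (centralG : <[cG]> \subset 'Z(G))
           (centralH : <[cH]> \subset 'Z(H)) (abA : abelian A)
           (decA : \big[dprod/1]_(i < r) <[e i]> = A).
Hypotheses (imG : piG @* G = A) (kerG : 'ker piG = <[cG]>)
           (imH : piH @* H = A) (kerH : 'ker piH = <[cH]>).
Hypothesis phiGH : forall a b, a \in A -> b \in A -> phi G piG cG a b = phi H piH cH a b.

Variable gh : 'I_r -> gT * hT.
Hypotheses (Ggh : forall i, (gh i).1 \in G) (Hgh : forall i, (gh i).2 \in H)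
           (piGgh : forall i, piG (gh i).1 = e i) (piHgh : forall i, piH (gh i).2 = e i).
Hypotheses (ogh : forall i, #[(gh i).1] = #[(gh i).2])
           (oe : forall i, #[(gh i).1] = #[e i] \/ #[(gh i).1] = (2 * #[e i])%N).

Local Notation z := ((cG, cH) : gT * hT).
Definition lift_graph : {group gT * hT} := << z |: [set gh i | i : 'I_r] >>%G.
Local Notation S := lift_graph.

Lemma fst_lift_graph : fst_morphism gT hT @* S = G.
Proof.
rewrite /lift_graph /= morphim_gen ?subsetT // morphimEsub ?subsetT // imsetU1 -imset_comp.
exact (gen_ker_lifts imG kerG (bigdprodWY decA) Ggh piGgh).
Qed.

Lemma snd_lift_graph : snd_morphism gT hT @* S = H.
Proof.
rewrite /lift_graph /= morphim_gen ?subsetT // morphimEsub ?subsetT // imsetU1 -imset_comp.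
exact (gen_ker_lifts imH kerH (bigdprodWY decA) Hgh piHgh).
Qed.

Lemma lift_graph_cent_cycle : S \subset 'C(<[z]>).
Proof.
rewrite /lift_graph cent_cycle gen_subG subUset sub1set cent1id /=.
apply/subsetP => _ /imsetP[i _ ->]; apply/cent1P.
have := Ggh i; have := Hgh i; case: (gh i) => x y /= Hy Gx.
change ((x * cG, y * cH) = (cG * x, cH * y)).
rewrite (commute_cycle_dom centralG (cycle_id cG) Gx).
by rewrite (commute_cycle_dom centralH (cycle_id cH) Hy).
Qed.

Lemma commP_lifts_cycle i j : commP (gh i) (gh j) \in <[z]>.
Proof.
have -> : commP (gh i) (gh j) = (commP (gh i).1 (gh j).1, commP (gh i).2 (gh j).2).
  by case: (gh i); case: (gh j).
have Ae k : e k \in A by rewrite -imG -(piGgh k) mem_morphim.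
rewrite (commP_phiE imG kerG centralG abA (Ggh i) (Ggh j)).
rewrite (commP_phiE imH kerH centralH abA (Hgh i) (Hgh j)) !piGgh !piHgh phiGH //.
by rewrite -expg_pair mem_cycle.
Qed.

Lemma expg_lift_cycle i : gh i ^+ #[e i] \in <[z]>.
Proof.
have := oe i; have := ogh i; have := Ggh i; have := Hgh i; have := piGgh i; have := piHgh i.
case: (gh i) => x y /= piy pix Hy Gx oxy [ox | ox]; rewrite expg_pair.
  by rewrite -ox expg_order oxy expg_order group1.
have -> : x ^+ #[e i] = cG ^+ #[cG]./2 by rewrite -pix (expg_order_double kerG) ?pix.
have -> : y ^+ #[e i] = cH ^+ #[cH]./2 by rewrite -piy (expg_order_double kerH) ?piy -?oxy.
by rewrite -ocGH -expg_pair mem_cycle.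
Qed.

Lemma card_lift_graph_leq : (#|S| <= #[cG] * #|A|)%N.
Proof.
set Z := <[z]>; have nZS : S \subset 'N(Z) := subset_trans lift_graph_cent_cycle (cent_sub _).
have sZS : Z \subset S by rewrite cycle_subG mem_gen // setU11.
have NZgh i : gh i \in 'N(Z) by apply: (subsetP nZS); rewrite mem_gen // setU1r // imset_f.
set Y := << [set coset Z (gh i) | i : 'I_r] >>.
have sSY : S / Z \subset Y.
  rewrite /quotient morphim_gen ?(subset_trans (subset_gen _) nZS) // gen_subG.
  apply/subsetP => _ /morphimP[v Nv /setU1P[-> | /imsetP[i _ ->]] ->].
    by rewrite /= coset_id ?cycle_id ?group1.
  by apply: mem_gen; apply/imsetP; exists i.
have abY : abelian Y.
  rewrite abelian_gen; apply/centsP => _ /imsetP[i _ ->] _ /imsetP[j _ ->].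
  have NZc := subsetP nZS _ (subsetP sZS _ (commP_lifts_cycle i j)).
  rewrite /commute -!morphM // (mulg_commP (gh i)) morphM ?(groupM, groupV) //.
  by rewrite /= coset_id ?commP_lifts_cycle ?mul1g.
have oY k : (#[coset Z (gh k)] <= #[e k])%N.
  rewrite (dvdn_leq (order_gt0 _)) // order_dvdn -morphX //.
  by rewrite /= coset_id ?expg_lift_cycle.
have oZ : (#|Z| <= #[cG])%N.
  by rewrite dvdn_leq // order_dvdn expg_pair ocGH !expg_order -ocGH expg_order.
rewrite -(Lagrange sZS) -card_quotient // leq_mul //.
apply: leq_trans (subset_leq_card sSY) (leq_trans (card_abelian_gen_leq abY) _).
by rewrite -(bigdprod_card decA) leq_prod.
Qed.

Lemma lift_graph_isom :
  exists f : {morphism G >-> hT}, isom G H f /\ (forall k, f (cG ^+ k) = cH ^+ k).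
Proof.
have cardGH : #|G| = #|H|.
  by rewrite (card_ker_cycle imG kerG) (card_ker_cycle imH kerH) ocGH.
have injm_fst : 'injm (restrm (subsetT S) (fst_morphism gT hT)).
  apply: injm_card_leq; rewrite restrmEsub // fst_lift_graph.
  by rewrite (card_ker_cycle imG kerG) card_lift_graph_leq.
have injm_snd : 'injm (restrm (subsetT S) (snd_morphism gT hT)).
  apply: injm_card_leq; rewrite restrmEsub // snd_lift_graph -cardGH.
  by rewrite (card_ker_cycle imG kerG) card_lift_graph_leq.
have [f [isof fE]] := graph_isom injm_fst injm_snd fst_lift_graph snd_lift_graph.
exists f; split => // k.
by have := fE (z ^+ k) (groupX _ (mem_gen (setU11 _ _))); rewrite expg_pair.
Qed.

End LiftGraph.

Theorem mainTheorem8
  (gT hT aT : finGroupType) (n : nat) (cG : gT) (cH : hT)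
  (G CG : {group gT}) (H CH : {group hT})
  (A : {group aT}) (r : nat) (e : 'I_r -> aT)
  (piG : {morphism G >-> aT}) (piH : {morphism H >-> aT}) :
  (0 < n)%N ->
  #[cG] = n -> #[cH] = n ->
  CG = <[cG]> :> {set gT} -> CH = <[cH]> :> {set hT} ->
  CG \subset 'Z(G) -> CH \subset 'Z(H) ->
  abelian A ->
  \big[dprod/1]_(i < r) <[e i]> = A ->
  piG @* G = A -> 'ker piG = CG ->
  piH @* H = A -> 'ker piH = CH ->
  (forall a b, a \in A -> b \in A -> phi G piG cG a b = phi H piH cH a b) ->
  (forall i : 'I_r, exists g, exists h,
      [/\ g \in G, h \in H, piG g = e i, piH h = e i &
          #[g] = #[h] /\ (#[g] = #[e i] \/ #[g] = (2 * #[e i])%N)]) ->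
  exists f : {morphism G >-> hT},
    isom G H f /\ (forall k, f (cG ^+ k) = cH ^+ k).
Proof.
move=> _ ocG ocH -> -> centralG centralH abA decA imG kerG imH kerH phiGH lifts.
have /fin_all_exists[gh ghP] : forall i, exists p : gT * hT,
    [/\ p.1 \in G, p.2 \in H, piG p.1 = e i, piH p.2 = e i &
        #[p.1] = #[p.2] /\ (#[p.1] = #[e i] \/ #[p.1] = (2 * #[e i])%N)].
  by move=> i; have [g [h liftsP]] := lifts i; exists (g, h).
have ocGH : #[cG] = #[cH] by rewrite ocG ocH.
apply: (lift_graph_isom ocGH centralG centralH abA decA imG kerG imH kerH phiGH (gh := gh)).
all: by move=> i; case: (ghP i) => ? ? ? ? [].
Qed.
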